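(* Let $A$ be an order-unit space with order unit $1$, and let $L$ be a seminorm on $A$ (taking finite values) such that $L(1)=0$. Set $\mathcal B_1=\{a\in A: L(a)\le 1\}$, and let $\tilde A=A/\mathbb R 1$ with its quotient norm $\|\cdot\|^{\sim}$. Then: (a) $\rho_L$ gives $S(A)$ finite diameter if and only if the image of $\mathcal B_1$ in $\tilde A$ is bounded for $\|\cdot\|^{\sim}$; (b) the topology on $S(A)$ determined by $\rho_L$ coincides with the weak-$*$ topology if and only if the image of $\mathcal B_1$ in $\tilde A$ is totally bounded for $\|\cdot\|^{\sim}$.
   Context: An order-unit space may be taken concretely as a real linear space of self-adjoint bounded operators on a Hilbert space containing the identity operator $1$ (the order unit), with the usual operator ordering and operator norm (it need not be complete). Its state space $S(A)$ is the set of positive linear functionals $\mu$ on $A$ with $\mu(1)=1$, with the weak-$*$ topology. For a seminorm $L$ on $A$, the (possibly $+\infty$-valued) metric $\rho_L$ on $S(A)$ is $\rho_L(\mu,\nu)=\sup\{|\mu(a)-\nu(a)|: a\in A,\ L(a)\le 1\}$. *)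

From HB Require Import structures.
From mathcomp Require Import all_boot all_order all_algebra.
From mathcomp Require Import boolp classical_sets reals constructive_ereal ereal.
Set Implicit Arguments. Unset Strict Implicit. Unset Printing Implicit Defensive.
Import Order.TTheory GRing.Theory Num.Theory.
Local Open Scope classical_set_scope.
Local Open Scope ring_scope.

Section OUS.
Variables (R : realType) (V : lmodType R).

Definition ous_le (pos : set V) (x y : V) : Prop := pos (y - x).

Definition is_order_unit_space (pos : set V) (e : V) : Prop :=
  [/\ (forall x y, pos x -> pos y -> pos (x + y)),
      (forall (r : R) x, 0 <= r -> pos x -> pos (r *: x)),
      (forall x, pos x -> pos (- x) -> x = 0),
      (forall x, exists r : R, 0 < r /\ ous_le pos (- (r *: e)) x /\ ous_le pos x (r *: e)) &
      (forall x, (forall r : R, 0 < r -> pos (r *: e + x)) -> pos x)].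

Definition ous_norm (pos : set V) (e : V) (x : V) : R :=
  inf [set r : R | 0 <= r /\ ous_le pos (- (r *: e)) x /\ ous_le pos x (r *: e)].

Definition quot_norm (pos : set V) (e : V) (a : V) : R :=
  inf [set ous_norm pos e (a - t *: e) | t in [set: R]].

Definition is_state (pos : set V) (e : V) (mu : V -> R) : Prop :=
  [/\ (forall (r : R) x y, mu (r *: x + y) = r * mu x + mu y),
      (forall x, pos x -> 0 <= mu x) &
      mu e = 1].

Definition is_seminorm (L : V -> R) : Prop :=
  (forall x y, L (x + y) <= L x + L y) /\ (forall (r : R) x, L (r *: x) = `|r| * L x).

Definition rhoL (L : V -> R) (mu nu : V -> R) : \bar R :=
  ereal_sup [set (`|mu a - nu a|)%:E | a in [set a | L a <= 1]].

Definition finite_diameter (pos : set V) (e : V) (L : V -> R) : Prop :=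
  exists M : R, forall mu nu, is_state pos e mu -> is_state pos e nu ->
    (rhoL L mu nu <= M%:E)%E.

Definition B1_quot_bounded (pos : set V) (e : V) (L : V -> R) : Prop :=
  exists M : R, forall a, L a <= 1 -> quot_norm pos e a <= M.

Definition B1_quot_totally_bounded (pos : set V) (e : V) (L : V -> R) : Prop :=
  forall eps : R, 0 < eps -> exists s : seq V,
    forall a, L a <= 1 -> exists2 b, b \in s & quot_norm pos e (a - b) < eps.

Definition weakstar_open (pos : set V) (e : V) (U : set (V -> R)) : Prop :=
  U `<=` is_state pos e /\
  forall mu, U mu -> exists (s : seq V) (eps : R), 0 < eps /\
    forall nu, is_state pos e nu -> (forall a, a \in s -> `|nu a - mu a| < eps) -> U nu.

Definition rhoL_open (pos : set V) (e : V) (L : V -> R) (U : set (V -> R)) : Prop :=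
  U `<=` is_state pos e /\
  forall mu, U mu -> exists eps : R, 0 < eps /\
    forall nu, is_state pos e nu -> (rhoL L mu nu < eps%:E)%E -> U nu.

Definition rhoL_topology_is_weakstar (pos : set V) (e : V) (L : V -> R) : Prop :=
  forall U : set (V -> R), rhoL_open pos e L U <-> weakstar_open pos e U.

End OUS.

From HB Require Import structures.
From mathcomp Require Import all_boot all_order all_algebra.
From mathcomp Require Import all_classical all_reals all_analysis finmap ring lra.
Import Order.TTheory GRing.Theory Num.Theory numFieldTopology.Exports.
Local Open Scope classical_set_scope.
Local Open Scope ring_scope.
Set Implicit Arguments. Unset Strict Implicit. Unset Printing Implicit Defensive.

(* The states are exactly the linear functionals dominated by the sublinear functional
   [x |-> inf {r | x <= r 1}], so by Hahn-Banach every [a] has states [mu, nu] with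
   [mu a - nu a >= 2 ||a||~], while [|mu a - nu a| <= 2 ||a||~] for all states.  Hence
   [rho_L(mu, nu)] and [2 sup_{B_1} ||a||~] bound each other, which is (a), and a finite
   [||.||~]-net of [B_1] puts a weak-* neighbourhood inside every [rho_L]-ball, while every
   weak-* neighbourhood contains a [rho_L]-ball since [L] is finite.  Conversely, if the two topologies agree,
   the weak-* compact state space is [rho_L]-totally bounded and [rho_L] is finite; testing
   [B_1] against a finite [rho_L]-net of states gives finitely many bounded real functions on
   [B_1], and a common finite net for them is a [||.||~]-net of [B_1]. *)

Section InfImage.
Variables (R : realType) (T : Type) (D : set T) (f : T -> R).

Lemma inf_img_le (b : R) t :
  (forall s, D s -> b <= f s) -> D t -> inf [set f s | s in D] <= f t.
Proof.
move=> hb Dt; apply: ge_inf; last by exists t.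
by exists b => _ [s Ds <-]; exact: hb.
Qed.

Lemma le_inf_img (c : R) :
  (exists t, D t) -> (forall s, D s -> c <= f s) -> c <= inf [set f s | s in D].
Proof.
move=> [t Dt] hc; apply: lb_le_inf; first by exists (f t), t.
by move=> _ [s Ds <-]; exact: hc.
Qed.

End InfImage.

Lemma ler_mem_sum (R : numDomainType) (T : eqType) (F : T -> R) (s : seq T) a :
  (forall x, 0 <= F x) -> a \in s -> F a <= \sum_(x <- s) F x.
Proof.
move=> F0; elim: s => // b s IH; rewrite in_cons big_cons => /orP[/eqP ->|/IH].
  by rewrite lerDl sumr_ge0.
by move/le_trans; apply; rewrite lerDr.
Qed.

(** * Hahn-Banach for sublinear functionals *)

Section HahnBanach.
Variables (R : realType) (V : lmodType R).

Definition sublinear (q : V -> R) :=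
  (forall x y, q (x + y) <= q x + q y) /\
  (forall (l : R) x, 0 < l -> q (l *: x) = l * q x).

Definition linear_functional (mu : V -> R) :=
  forall (r : R) x y, mu (r *: x + y) = r * mu x + mu y.

Section LinearFunctional.
Variables (mu : V -> R).
Hypothesis hmu : linear_functional mu.

Lemma lfun0 : mu 0 = 0.
Proof. by have := hmu 1 0 0; rewrite scaler0 addr0 mul1r; lra. Qed.

Lemma lfunD x y : mu (x + y) = mu x + mu y.
Proof. by rewrite -[x]scale1r hmu mul1r scale1r. Qed.

Lemma lfunZ (r : R) x : mu (r *: x) = r * mu x.
Proof. by rewrite -[r *: x]addr0 hmu lfun0 addr0. Qed.

Lemma lfunN x : mu (- x) = - mu x.
Proof. by rewrite -scaleN1r lfunZ mulN1r. Qed.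

Lemma lfunB x y : mu (x - y) = mu x - mu y.
Proof. by rewrite lfunD lfunN. Qed.

End LinearFunctional.

Lemma sublinear0 q : sublinear q -> q 0 = 0.
Proof. by move=> [_ hZ]; have := hZ 2 0 (ltr0Sn _ 1); rewrite scaler0; lra. Qed.

Lemma sublinearZ q (t : R) x : sublinear q -> 0 <= t -> q (t *: x) = t * q x.
Proof.
move=> hq; rewrite le_eqVlt => /orP[/eqP <-|]; last exact: hq.2.
by rewrite mul0r scale0r (sublinear0 hq).
Qed.

Lemma sublinearN q x : sublinear q -> - q (- x) <= q x.
Proof. by move=> hq; have := hq.1 x (- x); rewrite subrr (sublinear0 hq); lra. Qed.

(* The one-dimensional step of Hahn-Banach: pushing [q] down along the ray through [x] forces
   [q' (- x) <= - q x], so a minimal sublinear functional is odd, hence linear. *)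
Definition sublinear_reduce (q : V -> R) (x y : V) : R :=
  inf [set q (y + t *: x) - t * q x | t in [set t : R | 0 <= t]].

Section Reduce.
Variables (q : V -> R) (x : V).
Hypothesis hq : sublinear q.

Lemma sublinear_reduce_le y t : 0 <= t -> sublinear_reduce q x y <= q (y + t *: x) - t * q x.
Proof.
move=> t0; apply: (inf_img_le (b := - q (- y))) => // s s0.
by have := hq.1 (y + s *: x) (- y); rewrite addrC addKr sublinearZ //; lra.
Qed.

Lemma sublinear_reduce_ge y c :
  (forall t, 0 <= t -> c <= q (y + t *: x) - t * q x) -> c <= sublinear_reduce q x y.
Proof. by move=> h; apply: le_inf_img => //; exists 0 => /=. Qed.

Lemma sublinear_reduce_le_id y : sublinear_reduce q x y <= q y.
Proof. by have := sublinear_reduce_le y (lexx 0); rewrite scale0r addr0 mul0r subr0. Qed.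

Lemma sublinear_reduceN : sublinear_reduce q x (- x) <= - q x.
Proof.
by have := sublinear_reduce_le (- x) ler01; rewrite scale1r addNr (sublinear0 hq) mul1r add0r.
Qed.

Lemma sublinear_reduce_sublinear : sublinear (sublinear_reduce q x).
Proof.
split.
- move=> y1 y2; rewrite -lerBlDr; apply: sublinear_reduce_ge => t1 t10.
  rewrite lerBlDr -lerBlDl; apply: sublinear_reduce_ge => t2 t20; rewrite lerBlDl.
  apply: le_trans (sublinear_reduce_le (y1 + y2) (addr_ge0 t10 t20)) _.
  have := hq.1 (y1 + t1 *: x) (y2 + t2 *: x).
  by rewrite addrACA -scalerDl mulrDl; lra.
- move=> l y lp; apply/eqP; rewrite eq_le; apply/andP; split.
  + rewrite -ler_pdivrMl //; apply: sublinear_reduce_ge => t t0; rewrite ler_pdivrMl //.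
    apply: le_trans (sublinear_reduce_le (l *: y) (mulr_ge0 (ltW lp) t0)) _.
    by rewrite -scalerA -scalerDr hq.2 // mulrBr mulrA.
  + apply: sublinear_reduce_ge => t t0.
    have := sublinear_reduce_le y (divr_ge0 t0 (ltW lp)); rewrite -(ler_pM2l lp).
    move/le_trans; apply.
    have lt : l * (t / l) = t by rewrite mulrCA divff ?gt_eqF // mulr1.
    by rewrite mulrBr -hq.2 // scalerDr scalerA lt mulrA lt.
Qed.

End Reduce.

Definition minimal_sublinear (q : V -> R) :=
  sublinear q /\ forall p, sublinear p -> (forall x, p x <= q x) -> forall x, q x <= p x.

Lemma minimal_sublinear_linear q : minimal_sublinear q -> linear_functional q.
Proof.
move=> [hq qmin].
have qN x : q (- x) = - q x.
  have le_red := qmin _ (sublinear_reduce_sublinear x hq) (sublinear_reduce_le_id x hq).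
  have := le_trans (le_red (- x)) (sublinear_reduceN x hq).
  by have := sublinearN x hq; lra.
have qZ (r : R) y : q (r *: y) = r * q y.
  have [r0|r0] := leP 0 r; first exact: sublinearZ.
  by rewrite -(opprK r) scaleNr qN sublinearZ ?oppr_ge0 ?ltW //; lra.
move=> r y z; apply/eqP; rewrite eq_le; apply/andP; split.
- by rewrite -qZ; exact: hq.1.
- by have := hq.1 (r *: y + z) (- (r *: y)); rewrite addrC addKr qN qZ; lra.
Qed.

Definition pointwise_inf (A : set (V -> R)) (x : V) : R := inf [set q x | q in A].

Section ChainInf.
Variables (q0 : V -> R) (A : set (V -> R)).
Hypothesis A_sub : forall q, A q -> sublinear q /\ forall x, q x <= q0 x.
Hypothesis A_chain : forall p q, A p -> A q -> (forall x, p x <= q x) \/ (forall x, q x <= p x).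

Lemma pointwise_inf_le q x : A q -> pointwise_inf A x <= q x.
Proof.
move=> Aq; apply: (inf_img_le (b := - q0 (- x))) => // p /A_sub[hp hpq0].
by apply: le_trans (sublinearN x hp); rewrite lerN2.
Qed.

Lemma chain_inf_sublinear : (exists q, A q) -> sublinear (pointwise_inf A).
Proof.
move=> A0; have inf_ge c x : (forall q, A q -> c <= q x) -> c <= pointwise_inf A x.
  exact: le_inf_img.
split.
- move=> x y; rewrite -lerBlDr; apply: (inf_ge) => q1 Aq1.
  rewrite lerBlDr -lerBlDl; apply: (inf_ge) => q2 Aq2; rewrite lerBlDl.
  have [h12|h21] := A_chain Aq1 Aq2.
  + apply: le_trans (pointwise_inf_le _ Aq1) _; apply: le_trans ((A_sub Aq1).1.1 x y) _.
    by rewrite lerD2l h12.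
  + apply: le_trans (pointwise_inf_le _ Aq2) _; apply: le_trans ((A_sub Aq2).1.1 x y) _.
    by rewrite lerD2r h21.
- move=> l x lp; apply/eqP; rewrite eq_le; apply/andP; split.
  + rewrite -ler_pdivrMl //; apply: (inf_ge) => q Aq; rewrite ler_pdivrMl //.
    by apply: le_trans (pointwise_inf_le _ Aq) _; rewrite (A_sub Aq).1.2.
  + apply: (inf_ge) => q Aq; rewrite (A_sub Aq).1.2 // ler_pM2l //.
    exact: pointwise_inf_le.
Qed.

End ChainInf.

Lemma exists_minimal_sublinear q0 : sublinear q0 ->
  exists2 q, minimal_sublinear q & forall x, q x <= q0 x.
Proof.
move=> hq0.
pose T := {q : V -> R | sublinear q /\ forall x, q x <= q0 x}.
pose below (s t : T) := `[< forall x, sval t x <= sval s x >].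
have [| | |t tmin] := @ZL_preorder T (exist _ q0 (conj hq0 (fun=> lexx _))) below.
- by move=> s; apply/asboolP.
- by move=> a b c /asboolP hab /asboolP hbc; apply/asboolP => x; exact: le_trans (hbc x) (hab x).
- move=> A Achain.
  have [[s0 As0]|A0] := pselect (exists s, A s); last first.
    by exists (exist _ q0 (conj hq0 (fun=> lexx _))) => s As; exfalso; apply: A0; exists s.
  have sub : forall q, (sval @` A) q -> sublinear q /\ forall x, q x <= q0 x.
    by move=> _ [s _ <-]; exact: (proj2_sig s).
  have chain p q : (sval @` A) p -> (sval @` A) q ->
      (forall x, p x <= q x) \/ (forall x, q x <= p x).
    move=> [sp Asp <-] [sq Asq <-].
    by have [/asboolP|/asboolP] := Achain _ _ Asp Asq; [right|left].
  have mq0 x : pointwise_inf (sval @` A) x <= q0 x.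
    exact: le_trans (pointwise_inf_le sub x (imageP _ As0)) ((proj2_sig s0).2 x).
  have msub := chain_inf_sublinear sub chain (ex_intro _ _ (imageP sval As0)).
  exists (exist _ (pointwise_inf (sval @` A)) (conj msub mq0) : T) => s As; apply/asboolP => x /=.
  exact (pointwise_inf_le sub x (imageP sval As)).
- case: t tmin => q [hq hqq] tmin; exists q => //; split => // p hp hpq x.
  have hpq0 y : p y <= q0 y := le_trans (hpq y) (hqq y).
  have /tmin/asboolP : below (exist _ q (conj hq hqq)) (exist _ p (conj hp hpq0)).
    by apply/asboolP.
  exact.
Qed.

Lemma sublinear_supporting_functional q a : sublinear q ->
  exists mu, [/\ linear_functional mu, forall x, mu x <= q x & mu a = q a].
Proof.
move=> hq; have [p pmin hpq] := exists_minimal_sublinear (sublinear_reduce_sublinear a hq).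
have hl := minimal_sublinear_linear pmin.
exists p; split => [//|x|].
  exact: le_trans (hpq x) (sublinear_reduce_le_id _ hq x).
apply/eqP; rewrite eq_le; apply/andP; split.
  exact: le_trans (hpq a) (sublinear_reduce_le_id _ hq a).
by have := le_trans (hpq (- a)) (sublinear_reduceN a hq); rewrite lfunN // lerN2.
Qed.

End HahnBanach.

(** * States of an order-unit space *)

Section OrderUnitSpace.
Variables (R : realType) (V : lmodType R) (pos : set V) (e : V).
Hypothesis HA : is_order_unit_space pos e.

Lemma posD x y : pos x -> pos y -> pos (x + y).
Proof. by case: HA => h *; exact: h. Qed.

Lemma posZ (r : R) x : 0 <= r -> pos x -> pos (r *: x).
Proof. by case: HA => _ h *; exact: h. Qed.

Lemma pos_anti x : pos x -> pos (- x) -> x = 0.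
Proof. by case: HA => _ _ h *; exact: h. Qed.

Lemma order_unit_bound x : exists2 r : R, 0 < r & pos (x + r *: e) /\ pos (r *: e - x).
Proof. by case: HA => _ _ _ h _; have [r [r0 []]] := h x; rewrite /ous_le opprK; exists r. Qed.

Lemma pos0 : pos 0.
Proof. by have [r _ [+ _]] := order_unit_bound 0; move/(posZ (lexx 0)); rewrite scale0r. Qed.

Lemma pos_unit : pos e.
Proof.
have [r r0 [+ _]] := order_unit_bound 0.
have r0' : 0 <= r^-1 by rewrite invr_ge0 ltW.
rewrite add0r => /(posZ r0').
by rewrite scalerA mulVf ?gt_eqF // scale1r.
Qed.

Lemma unit_eq0_trivial : e = 0 -> forall x : V, x = 0.
Proof.
move=> e0 x; have [r _ []] := order_unit_bound x.
by rewrite e0 scaler0 add0r addr0; exact: pos_anti.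
Qed.

Lemma pos_scale_unit_ge0 (c : R) : e != 0 -> pos (c *: e) -> 0 <= c.
Proof.
move=> ne pc; rewrite leNgt; apply/negP => c_lt0.
have cV0 : 0 <= (- c)^-1 by rewrite invr_ge0 oppr_ge0 ltW.
have := posZ cV0 pc.
rewrite scalerA invrN mulNr mulVf ?lt_eqF // scaleN1r => pNe.
by move/eqP: ne; apply; exact: pos_anti pos_unit pNe.
Qed.

(* On a nonzero space, the largest value of a state at [x]. *)
Definition ou_upper (x : V) : R := inf [set r : R | pos (r *: e - x)].

Lemma ou_upper_has_inf x : e != 0 -> has_inf [set r : R | pos (r *: e - x)].
Proof.
move=> ne; split; first by have [r _ [_ h]] := order_unit_bound x; exists r.
have [r0 _ [h _]] := order_unit_bound x; exists (- r0) => r hr.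
have := posD hr h; rewrite addrA subrK -scalerDl => /(pos_scale_unit_ge0 ne); lra.
Qed.

Lemma ou_upper_le x r : e != 0 -> pos (r *: e - x) -> ou_upper x <= r.
Proof. by move=> ne; apply: ge_inf; exact: (ou_upper_has_inf x ne).2. Qed.

Lemma ou_upper_ge x c : (forall r, pos (r *: e - x) -> c <= r) -> c <= ou_upper x.
Proof.
move=> h; apply: lb_le_inf => //.
by have [r _ [_ hr]] := order_unit_bound x; exists r.
Qed.

Lemma ou_upper_sublinear : e != 0 -> sublinear ou_upper.
Proof.
move=> ne; split.
- move=> x y; rewrite -lerBlDr; apply: ou_upper_ge => r1 h1.
  rewrite lerBlDr -lerBlDl; apply: ou_upper_ge => r2 h2; rewrite lerBlDl.
  apply: ou_upper_le => //.
  by rewrite scalerDl opprD addrACA; exact: posD.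
- move=> l x lp; apply/eqP; rewrite eq_le; apply/andP; split.
  + rewrite -ler_pdivrMl //; apply: ou_upper_ge => r h; rewrite ler_pdivrMl //.
    by apply: ou_upper_le => //; rewrite -scalerA -scalerBr; exact: posZ (ltW lp) h.
  + apply: ou_upper_ge => s h; rewrite mulrC -ler_pdivlMr //.
    apply: ou_upper_le => //.
    have -> : s / l *: e - x = l^-1 *: (s *: e - l *: x).
      by rewrite scalerBr !scalerA mulVf ?gt_eqF // scale1r mulrC.
    by apply: posZ h; rewrite invr_ge0 ltW.
Qed.

Section States.
Variable mu : V -> R.
Hypothesis hmu : is_state pos e mu.

Lemma state_lfun : linear_functional mu.
Proof. by case: hmu. Qed.

Lemma state_le x (r : R) : pos (r *: e - x) -> mu x <= r.
Proof.
case: hmu => hl hp he /hp.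
by rewrite (lfunB hl) (lfunZ hl) he mulr1 subr_ge0.
Qed.

Lemma state_norm_le x (r : R) : pos (x + r *: e) -> pos (r *: e - x) -> `|mu x| <= r.
Proof.
move=> h1 h2; rewrite ler_norml state_le // andbT lerNl -(lfunN state_lfun).
by apply: state_le; rewrite opprK addrC.
Qed.

End States.

Lemma states_bounded a : exists r : R, forall mu, is_state pos e mu -> `|mu a| <= r.
Proof.
have [r _ [h1 h2]] := order_unit_bound a.
by exists r => mu hmu; exact (state_norm_le hmu h1 h2).
Qed.

Lemma state_of_le_ou_upper mu : e != 0 -> linear_functional mu ->
  (forall x, mu x <= ou_upper x) -> is_state pos e mu.
Proof.
move=> ne hl hle; split => //.
- move=> x px; rewrite -oppr_le0 -(lfunN hl).
  by apply: le_trans (hle _) (ou_upper_le ne _); rewrite scale0r add0r opprK.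
- have h1 : mu e <= 1.
    by apply: le_trans (hle _) (ou_upper_le ne _); rewrite scale1r subrr; exact: pos0.
  have h2 : mu (- e) <= -1.
    by apply: le_trans (hle _) (ou_upper_le ne _); rewrite scaleN1r subrr; exact: pos0.
  by rewrite (lfunN hl) in h2; lra.
Qed.

Lemma exists_state_at a : e != 0 -> exists2 mu, is_state pos e mu & mu a = ou_upper a.
Proof.
move=> ne; have [mu [hl hle mua]] := sublinear_supporting_functional a (ou_upper_sublinear ne).
by exists mu => //; exact: state_of_le_ou_upper.
Qed.

Lemma ous_norm_ge0 x : 0 <= ous_norm pos e x.
Proof.
apply: lb_le_inf; last by move=> r [].
have [r r0 [h1 h2]] := order_unit_bound x.
by exists r; split; [exact: ltW | rewrite /ous_le opprK].
Qed.

(* With [t] the midpoint of [[-r2, r1]], [a - t e] lies between [-/+ (r1 + r2)/2 e]. *)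
Lemma quot_norm_le a (r1 r2 : R) : pos (r1 *: e - a) -> pos (a + r2 *: e) ->
  0 <= r1 + r2 -> quot_norm pos e a <= (r1 + r2) / 2.
Proof.
move=> h1 h2 h0.
apply: le_trans (_ : _ <= ous_norm pos e (a - ((r1 - r2) / 2) *: e)) _.
  apply: ge_inf; last by exists ((r1 - r2) / 2).
  by exists 0 => _ [t _ <-]; exact: ous_norm_ge0.
apply: ge_inf; first by exists 0 => r [].
split; first exact: divr_ge0.
split; rewrite /ous_le.
- suff -> : a - (r1 - r2) / 2 *: e - - ((r1 + r2) / 2 *: e) = a + r2 *: e by [].
  by rewrite opprK -addrA -scaleNr -scalerDl; congr (_ + _ *: _); lra.
- suff -> : (r1 + r2) / 2 *: e - (a - (r1 - r2) / 2 *: e) = r1 *: e - a by [].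
  by rewrite opprB addrA -scalerDl; congr (_ *: _ - _); lra.
Qed.

Lemma quot_norm_le_states a : e != 0 -> exists mu nu,
  [/\ is_state pos e mu, is_state pos e nu & quot_norm pos e a <= (mu a - nu a) / 2].
Proof.
move=> ne; have [mu hmu mua] := exists_state_at a ne.
have [nu hnu nua] := exists_state_at (- a) ne.
exists mu, nu; split => //; rewrite (lfunN (state_lfun hnu)) in nua.
apply/ler_addgt0Pr => eps eps0; have eps2 : 0 < eps / 2 by rewrite divr_gt0.
have [r1 h1 lt1] := inf_adherent eps2 (ou_upper_has_inf a ne).
have [r2 h2 lt2] := inf_adherent eps2 (ou_upper_has_inf (- a) ne).
rewrite /= opprK addrC in h2.
have h0 : 0 <= r1 + r2.
  apply: (pos_scale_unit_ge0 ne).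
  suff -> : (r1 + r2) *: e = (r1 *: e - a) + (a + r2 *: e) by exact: posD.
  by rewrite addrA subrK scalerDl.
have := quot_norm_le h1 h2 h0; rewrite /ou_upper in mua nua; lra.
Qed.

Lemma state_dist_le_quot_norm mu nu a : is_state pos e mu -> is_state pos e nu ->
  `|mu a - nu a| <= 2 * quot_norm pos e a.
Proof.
move=> hmu hnu; rewrite -ler_pdivrMl //; apply: le_inf_img; first by exists 0.
move=> t _; apply: lb_le_inf.
  have [r r0 [h1 h2]] := order_unit_bound (a - t *: e).
  by exists r; split; [exact: ltW | rewrite /ous_le opprK].
move=> r [r0 []]; rewrite /ous_le opprK => h1 h2; rewrite ler_pdivrMl //.
have shift (xi : V -> R) : is_state pos e xi -> xi (a - t *: e) = xi a - t.
  by case=> hl _ he; rewrite (lfunB hl) (lfunZ hl) he mulr1.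
have := state_norm_le hmu h1 h2; have := state_norm_le hnu h1 h2.
rewrite !shift // => hn hm.
have -> : mu a - nu a = (mu a - t) - (nu a - t) by ring.
by apply: le_trans (ler_normB _ _) _; lra.
Qed.

End OrderUnitSpace.

Section RhoL.
Variables (R : realType) (V : lmodType R) (L : V -> R).

Lemma rhoL_ge mu nu a : L a <= 1 -> ((`|mu a - nu a|)%:E <= rhoL L mu nu)%E.
Proof. by move=> h; apply: ereal_sup_ubound; exists a. Qed.

Lemma rhoL_le mu nu (c : R) : (forall a, L a <= 1 -> `|mu a - nu a| <= c) ->
  (rhoL L mu nu <= c%:E)%E.
Proof. by move=> h; apply: ge_ereal_sup => _ [a ha <-]; rewrite lee_fin; exact: h. Qed.

Lemma rhoL_lt mu nu a (c : R) : L a <= 1 -> (rhoL L mu nu < c%:E)%E -> `|mu a - nu a| < c.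
Proof. by move=> h1 h2; rewrite -lte_fin; exact: le_lt_trans (rhoL_ge mu nu h1) h2. Qed.

Hypothesis HL : is_seminorm L.

Lemma seminorm0 : L 0 = 0.
Proof. by have := HL.2 0 0; rewrite scale0r normr0 mul0r. Qed.

Lemma seminorm_ge0 x : 0 <= L x.
Proof. by have := HL.1 x (- x); rewrite subrr seminorm0 -scaleN1r HL.2 normrN normr1; lra. Qed.

Lemma rhoL_lt_scaled (mu nu : V -> R) a (c r : R) :
  linear_functional mu -> linear_functional nu -> 0 < c -> L a <= c ->
  (rhoL L mu nu < r%:E)%E -> `|mu a - nu a| < c * r.
Proof.
move=> hmu hnu c0 hLa hr.
have cV0 : 0 <= c^-1 by rewrite invr_ge0 ltW.
have hLa' : L (c^-1 *: a) <= 1 by rewrite HL.2 ger0_norm // ler_pdivrMl // mulr1.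
have := rhoL_lt hLa' hr.
by rewrite (lfunZ hmu) (lfunZ hnu) -mulrBr normrM ger0_norm // ltr_pdivrMl.
Qed.

End RhoL.

Section StateSpaceMetric.
Variables (R : realType) (V : lmodType R) (pos : set V) (e : V).
Hypothesis HA : is_order_unit_space pos e.
Variable L : V -> R.
Hypothesis HL : is_seminorm L.

Lemma quot_norm_unit0 a : e = 0 -> quot_norm pos e a <= 0.
Proof.
move=> e0; rewrite (unit_eq0_trivial HA e0 a).
apply: le_trans (quot_norm_le HA (r1 := 0) (r2 := 0) _ _ _) _;
  by rewrite ?scale0r ?subr0 ?addr0 ?mul0r //; exact: pos0 HA.
Qed.

Lemma finite_diameter_iff_quot_bounded :
  finite_diameter pos e L <-> B1_quot_bounded pos e L.
Proof.
split=> [[M hM]|[M hM]].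
- have [e0|ne] := eqVneq e 0; first by exists 0 => a _; exact: quot_norm_unit0.
  exists (M / 2) => a ha; have [mu [nu [hmu hnu hq]]] := quot_norm_le_states HA a ne.
  apply: le_trans hq _; rewrite ler_pM2r // -lee_fin.
  apply: le_trans (hM _ _ hmu hnu); apply: le_trans (rhoL_ge mu nu ha).
  by rewrite lee_fin ler_norm.
- exists (2 * M) => mu nu hmu hnu; apply: rhoL_le => a ha.
  by apply: le_trans (state_dist_le_quot_norm HA a hmu hnu) _; rewrite ler_pM2l // hM.
Qed.

Lemma rhoL_open_of_weakstar_open U : weakstar_open pos e U -> rhoL_open pos e L U.
Proof.
move=> [Us hU]; split => // mu Umu.
have [s [eps [eps0 hnb]]] := hU _ Umu.
pose K := 1 + \sum_(x <- s) L x.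
have K0 : 0 < K by rewrite ltr_wpDr // sumr_ge0 // => x _; exact: seminorm_ge0.
exists (eps / K); split; first exact: divr_gt0.
move=> nu hnu hrho; apply: hnb => // a as_; rewrite distrC.
have hLa : L a <= K.
  by apply: le_trans (ler_mem_sum (seminorm_ge0 HL) as_) _; rewrite lerDr.
have := rhoL_lt_scaled HL (state_lfun (Us _ Umu)) (state_lfun hnu) K0 hLa hrho.
by rewrite mulrC divfK ?gt_eqF.
Qed.

(* For states, [(mu - nu) a] and [(mu - nu) b] differ by at most [2 ||a - b||~]. *)
Lemma weakstar_open_of_rhoL_open U : B1_quot_totally_bounded pos e L ->
  rhoL_open pos e L U -> weakstar_open pos e U.
Proof.
move=> TB [Us hU]; split => // mu Umu.
have [eps [eps0 hball]] := hU _ Umu.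
have eps4 : 0 < eps / 4 by rewrite divr_gt0.
have [s hs] := TB _ eps4.
exists s, (eps / 4); split => // nu hnu hnear; apply: hball => //.
have [hlmu hlnu] := (state_lfun (Us _ Umu), state_lfun hnu).
apply: (@le_lt_trans _ _ ((3 * eps / 4)%:E)); last by rewrite lte_fin; lra.
apply: rhoL_le => a ha; have [b bs hb] := hs a ha.
have := hnear b bs; have := state_dist_le_quot_norm HA (a - b) (Us _ Umu) hnu.
rewrite (lfunB hlmu) (lfunB hlnu) => hab hb'.
have -> : mu a - nu a = (mu a - mu b - (nu a - nu b)) - (nu b - mu b) by ring.
by apply: le_trans (ler_normB _ _) _; lra.
Qed.

End StateSpaceMetric.

(** * Finite nets for finitely many bounded functions *)

Section FiniteNet.
Variables (R : realType) (X : eqType) (eta : R).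

Definition finite_net (fs : seq (X -> R)) (B : set X) :=
  exists s : seq X, (forall b, b \in s -> B b) /\
    forall a, B a -> exists2 b, b \in s & forall f, f \in fs -> `|f a - f b| < eta.

Lemma finite_net_nil B : finite_net [::] B.
Proof.
have [[b Bb]|B0] := pselect (exists b, B b).
  by exists [:: b]; split => [_ /[!inE] /eqP ->|a _] //; exists b; rewrite ?mem_head.
by exists [::]; split => // a Ba; case: B0; exists a.
Qed.

Lemma finite_net_setU fs B1 B2 :
  finite_net fs B1 -> finite_net fs B2 -> finite_net fs (B1 `|` B2).
Proof.
move=> [s1 [s1B h1]] [s2 [s2B h2]]; exists (s1 ++ s2); split.
  by move=> b; rewrite mem_cat => /orP[/s1B|/s2B]; [left|right].
move=> a [/h1|/h2] [b bs hb]; exists b => //; by rewrite mem_cat bs ?orbT.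
Qed.

(* Cut [B] into slices of width [eta / 2] in the values of [f] and net each slice for [fs]. *)
Lemma finite_net_cons f fs B (C : R) : 0 < eta -> (forall a, B a -> `|f a| <= C) ->
  (forall B', B' `<=` B -> finite_net fs B') -> finite_net (f :: fs) B.
Proof.
move=> eta_gt0 fC netB; pose h := eta / 2; have h0 : 0 < h by rewrite divr_gt0.
pose below n := B `&` [set a | f a < - C + n%:R * h].
have net_below n : finite_net (f :: fs) (below n).
  elim: n => [|n IH].
    exists [::]; split => // a [Ba]; rewrite /= mul0r addr0.
    by have := fC a Ba; rewrite ler_norml => /andP[+ _]; rewrite leNgt => /negP.
  have -> : below n.+1 = below n `|` (below n.+1 `\` below n).
    by rewrite setDUK // => a [Ba] /= fa; split; rewrite //= -natr1 mulrDl mul1r; lra.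
  apply: finite_net_setU => //.
  have [s [sB hs]] := netB (below n.+1 `\` below n) (fun a ha => ha.1.1).
  exists s; split => // a ha; have [b bs hb] := hs a ha.
  exists b => // g; rewrite in_cons => /orP[/eqP ->|]; last exact: hb.
  have slice c : (below n.+1 `\` below n) c -> - C + n%:R * h <= f c < - C + n%:R * h + h.
    move=> [[Bc]]; rewrite /= -natr1 mulrDl mul1r addrA => -> /= notb.
    by rewrite andbT leNgt; apply/negP => fc; apply: notb.
  have /andP[ha1 ha2] := slice a ha; have /andP[hb1 hb2] := slice b (sB b bs).
  have h_lt : h < eta by rewrite /h; lra.
  by rewrite ltr_distl; apply/andP; split; lra.
have [n hn] : exists n : nat, 2 * C < n%:R * h.
  have := archi_boundP (divr_ge0 (normr_ge0 (2 * C)) (ltW h0)).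
  rewrite ltr_pdivrMr // => hn; exists (Num.Def.archi_bound (`|2 * C| / h)).
  exact: le_lt_trans (ler_norm _) hn.
suff -> : B = below n by [].
rewrite eqEsubset; split => [a Ba|a []//]; split => //=.
by have := fC a Ba; rewrite ler_norml => /andP[? ?]; lra.
Qed.

Lemma finite_net_bounded fs B : 0 < eta ->
  (forall f, f \in fs -> exists C : R, forall a, B a -> `|f a| <= C) -> finite_net fs B.
Proof.
move=> eta_gt0; elim: fs B => [|f fs IH] B fsC; first exact: finite_net_nil.
have [C fC] := fsC f (mem_head _ _).
apply: (finite_net_cons eta_gt0 fC) => B' B'B; apply: IH => g gfs.
have [Cg gC] : exists Cg : R, forall a, B a -> `|g a| <= Cg by apply: fsC; rewrite in_cons gfs orbT.
by exists Cg => a /B'B; exact: gC.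
Qed.

End FiniteNet.

(** * The weak-* topology on the state space *)

(* [compact_cover] is stated for pointed spaces. *)
HB.instance Definition _ (R : realType) (V : Type) := isPointed.Build {ptws V -> R} (fun=> 0).

Section WeakStar.
Variables (R : realType) (V : lmodType R).

Lemma eval_continuous (x : V) : continuous (fun f : {ptws V -> R} => f x).
Proof. exact: proj_continuous. Qed.

Definition weakstar_ball (mu : V -> R) (s : seq V) (eps : R) : set {ptws V -> R} :=
  [set g | forall a, a \in s -> `|g a - mu a| < eps].

Lemma open_weakstar_ball mu s eps : open (weakstar_ball mu s eps).
Proof.
rewrite /weakstar_ball; elim: s => [|a s IH].
  rewrite (_ : [set g | _] = setT); first exact: openT.
  by rewrite predeqE => g; split => // _ a; rewrite in_nil.
rewrite (_ : [set g | _] = ((fun g : {ptws V -> R} => g a) @^-1` `]mu a - eps, mu a + eps[) `&`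
   [set g | forall a, a \in s -> `|g a - mu a| < eps]).
  apply: openI => //; apply: open_comp => [g _|]; [exact: eval_continuous | exact: interval_open].
rewrite predeqE => g; split.
- move=> h; split; first by rewrite /= in_itv /= -ltr_distlC distrC h ?mem_head.
  by move=> b bs; apply: h; rewrite in_cons bs orbT.
- move=> [/=]; rewrite in_itv /= -ltr_distlC distrC => ha hs b.
  by rewrite in_cons => /orP[/eqP ->|]; [exact: ha | exact: hs].
Qed.

Variables (pos : set V) (e : V).
Hypothesis HA : is_order_unit_space pos e.

Lemma closed_states : closed [set f : {ptws V -> R} | is_state pos e f].
Proof.
pose ev (x : V) (f : {ptws V -> R}) := f x.
have ev_cont x : continuous (ev x) by exact: eval_continuous.
have -> : [set f : {ptws V -> R} | is_state pos e f] =
    \bigcap_(p in [set: R * V * V])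
      ((fun f => ev (p.1.1 *: p.1.2 + p.2) f - (p.1.1 * ev p.1.2 f + ev p.2 f)) @^-1` [set 0])
    `&` \bigcap_(x in pos) (ev x @^-1` [set r | 0 <= r])
    `&` (ev e @^-1` [set 1]).
  rewrite predeqE => f; split.
  - case=> hl hp he; split => //; split => [[[r x] y] _|x /hp //].
    by rewrite /preimage /ev /= hl subrr.
  - move=> [[hl hp] he]; split => // r x y; apply/eqP; rewrite -subr_eq0; apply/eqP.
    exact: (hl (r, x, y)).
apply: closedI; first apply: closedI.
- apply: closed_bigI => -[[r x] y] _; apply: preimage_closed => [f _|]; last exact: closed_eq.
  apply: (continuousB (ev_cont _ f)); apply: (continuousD _ (ev_cont _ f)).
  have cst_r : {for f, continuous (fun=> r)} by exact: cst_continuous.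
  exact (continuousM cst_r (ev_cont x f)).
- apply: closed_bigI => x _; apply: preimage_closed => [f _|]; [exact: ev_cont | exact: closed_ge].
- apply: preimage_closed => [f _|]; [exact: ev_cont | exact: closed_eq].
Qed.

Lemma weakstar_open_trace U : weakstar_open pos e U ->
  exists2 O : set {ptws V -> R}, open O & O `&` [set f | is_state pos e f] = U.
Proof.
move=> [Us hU].
pose box (w : (V -> R) * seq V * R) := weakstar_ball w.1.1 w.1.2 w.2.
pose good (w : (V -> R) * seq V * R) :=
  [/\ U w.1.1, 0 < w.2 & forall nu, is_state pos e nu -> box w nu -> U nu].
exists (\bigcup_(w in good) box w); first by apply: bigcup_open => w _; exact: open_weakstar_ball.
rewrite eqEsubset; split => [f [[w [_ _ hw] fw] hf]|mu Umu]; first exact: hw.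
split; last exact: Us.
have [s [eps [eps0 hs]]] := hU mu Umu.
by exists (mu, s, eps) => // a _; rewrite subrr normr0.
Qed.

Lemma compact_states : compact [set f : {ptws V -> R} | is_state pos e f].
Proof.
have [k hk] := choice (states_bounded HA).
apply: (subclosed_compact closed_states (tychonoff (fun a => @segment_compact R (- k a) (k a)))).
by move=> f hf a /=; rewrite in_itv /= -ler_norml; exact: hk.
Qed.

End WeakStar.

Section TopologyCoincidence.
Variables (R : realType) (V : lmodType R) (pos : set V) (e : V).
Hypothesis HA : is_order_unit_space pos e.
Variable L : V -> R.
Hypothesis HL : is_seminorm L.

Lemma state_segment mu nu (t : R) : is_state pos e mu -> is_state pos e nu ->
  0 <= t <= 1 -> is_state pos e (fun x => mu x + t * (nu x - mu x)).
Proof.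
move=> hmu hnu /andP[t0 t1]; have [hlmu hlnu] := (state_lfun hmu, state_lfun hnu).
split.
- by move=> r x y; rewrite !(lfunD hlmu, lfunD hlnu, lfunZ hlmu, lfunZ hlnu); ring.
- move=> x px; have [_ + _] := hmu; have [_ + _] := hnu => /(_ x px) nx /(_ x px) mx.
  have -> : mu x + t * (nu x - mu x) = (1 - t) * mu x + t * nu x by ring.
  by rewrite addr_ge0 // mulr_ge0 // subr_ge0.
- by case: hmu => _ _ ->; case: hnu => _ _ ->; rewrite subrr mulr0 addr0.
Qed.

Lemma rhoL_open_ball mu (delta : R) :
  rhoL_open pos e L [set nu | is_state pos e nu /\ (rhoL L mu nu < delta%:E)%E].
Proof.
split=> [nu []//|nu [hnu hr]].
have : (0%:E <= rhoL L mu nu)%E.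
  have L0 : L 0 <= 1 by rewrite (seminorm0 HL) ler01.
  by apply: le_trans (rhoL_ge mu nu L0); rewrite lee_fin.
case E: (rhoL L mu nu) hr => [r| |] //; rewrite lte_fin lee_fin => hr r0.
exists ((delta - r) / 2); split; first by rewrite divr_gt0 // subr_gt0.
move=> zeta hz hr2; split => //.
apply: (@le_lt_trans _ _ ((r + (delta - r) / 2)%:E)); last by rewrite lte_fin; lra.
apply: rhoL_le => a ha; have := rhoL_lt ha hr2.
have : `|mu a - nu a| <= r by rewrite -lee_fin -E; exact: rhoL_ge.
by have := ler_distD (nu a) (mu a) (zeta a); lra.
Qed.

Hypothesis Htop : rhoL_topology_is_weakstar pos e L.

(* The states at finite distance from [mu] form a [rho_L]-open, hence weak-* open, set; it
   contains the points of the segment [mu, nu] close enough to [mu], and the distance from [mu]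
   scales linearly along the segment. *)
Lemma rhoL_finite mu nu : is_state pos e mu -> is_state pos e nu ->
  exists C : R, forall a, L a <= 1 -> `|mu a - nu a| <= C.
Proof.
move=> hmu hnu.
pose U xi := is_state pos e xi /\ exists C : R, forall a, L a <= 1 -> `|mu a - xi a| <= C.
have Uo : rhoL_open pos e L U.
  split=> [xi []//|xi [hxi [C hC]]].
  exists 1; split => // zeta hz hr; split => //; exists (C + 1) => a ha.
  have := rhoL_lt ha hr; have := hC a ha; have := ler_distD (xi a) (mu a) (zeta a); lra.
have [_ /(_ mu) []] := (Htop U).1 Uo.
  by split => //; exists 0 => a _; rewrite subrr normr0.
move=> s [eps [eps0 hnb]].
pose D := 1 + \sum_(a <- s) `|nu a - mu a|.
have D0 : 0 < D by rewrite ltr_wpDr // sumr_ge0.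
have epsD : 0 < eps + D by rewrite addr_gt0.
pose t := eps / (eps + D).
have t0 : 0 < t by rewrite divr_gt0.
have t1 : t <= 1 by rewrite ler_pdivrMr // mul1r lerDl ltW.
have tD : t * D < eps by rewrite mulrAC ltr_pdivrMr // ltr_pM2l // ltrDr.
have [_ [C hC]] : U (fun x => mu x + t * (nu x - mu x)).
  apply: hnb; first by apply: state_segment; rewrite // ltW.
  move=> a as_; rewrite addrAC subrr add0r normrM gtr0_norm //.
  apply: le_lt_trans tD; rewrite ler_pM2l //.
  by apply: le_trans (ler_mem_sum (fun x => normr_ge0 (nu x - mu x)) as_) _; rewrite lerDr.
exists (C / t) => a ha; have := hC a ha.
rewrite opprD addrA subrr add0r normrN normrM gtr0_norm // => h.
by rewrite ler_pdivlMr // mulrC distrC.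
Qed.

Lemma states_rhoL_totally_bounded (delta : R) : 0 < delta ->
  exists ms : seq {ptws V -> R}, (forall m, m \in ms -> is_state pos e m) /\
    forall nu, is_state pos e nu ->
      exists2 m, m \in ms & forall a, L a <= 1 -> `|m a - nu a| < delta.
Proof.
move=> delta0.
pose ball mu := [set nu | is_state pos e nu /\ (rhoL L mu nu < delta%:E)%E].
have ball_trace (mu : {ptws V -> R}) : exists N : set {ptws V -> R},
    open N /\ N `&` [set f | is_state pos e f] = ball mu.
  have [N oN trace] := weakstar_open_trace ((Htop _).1 (rhoL_open_ball mu delta)).
  by exists N.
have [N hN] := choice ball_trace.
have := compact_states HA; rewrite compact_cover.
move=> /(_ _ [set mu | is_state pos e mu] N (fun mu _ => (hN mu).1)) [].
  move=> mu hmu; exists mu => //.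
  suff : ball mu mu by rewrite -(hN mu).2 => -[].
  split => //; apply: le_lt_trans (rhoL_le (c := 0) _) _; last by rewrite lte_fin.
  by move=> a _; rewrite subrr normr0.
move=> D DS cov; exists (enum_fset D); split => [m /DS /set_mem //|nu hnu].
have [m mD Nmnu] := cov nu hnu.
have : ball m nu by rewrite -(hN m).2.
by move=> [_ hr]; exists m => // a /rhoL_lt; apply.
Qed.

(* Near a pair of states realizing [quot_norm (a - b)] there are states [m1, m2] of a finite
   [rho_L]-net; a finite net of [B_1] for the finitely many functions [m - mu0] then controls
   [quot_norm (a - b)]. *)
Lemma quot_totally_bounded_of_topology_eq : B1_quot_totally_bounded pos e L.
Proof.
move=> eps eps0.
have [e0|ne] := eqVneq e 0.
  exists [:: 0] => a _; exists 0; rewrite ?mem_head //.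
  by apply: le_lt_trans eps0; exact: quot_norm_unit0.
have [ms [msS hms]] := states_rhoL_totally_bounded (divr_gt0 eps0 (ltr0Sn _ 7)).
have [mu0 hmu0 _] := exists_state_at HA 0 ne.
pose F (m : {ptws V -> R}) : V -> R := fun x => m x - mu0 x.
have [s [sB hs]] : finite_net (eps / 2) (map F ms) [set a | L a <= 1].
  apply: finite_net_bounded; first by rewrite divr_gt0.
  move=> _ /mapP[m mms ->]; have [C hC] := rhoL_finite (msS _ mms) hmu0.
  by exists C => a ha; exact: hC.
exists s => a ha; have [b bs hab] := hs a ha; exists b => //.
have hbB : L b <= 1 := sB b bs.
have [mu [nu [hmu hnu hq]]] := quot_norm_le_states HA (a - b) ne.
have [m1 m1s h1] := hms mu hmu; have [m2 m2s h2] := hms nu hnu.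
have := hab (F m1) (map_f F m1s); have := hab (F m2) (map_f F m2s).
rewrite (lfunB (state_lfun hmu)) (lfunB (state_lfun hnu)) in hq.
have := h1 a ha; have := h1 b hbB; have := h2 a ha; have := h2 b hbB.
rewrite /F !ltr_norml => /andP[? ?] /andP[? ?] /andP[? ?] /andP[? ?] /andP[? ?] /andP[? ?].
lra.
Qed.

End TopologyCoincidence.

Theorem theorem2p1 (R : realType) (V : lmodType R) (pos : set V) (e : V)
  (HA : is_order_unit_space pos e) (L : V -> R) (HL : is_seminorm L)
  (HL1 : L e = 0) :
  (finite_diameter pos e L <-> B1_quot_bounded pos e L) /\
  (rhoL_topology_is_weakstar pos e L <-> B1_quot_totally_bounded pos e L).
Proof.
split; first exact: finite_diameter_iff_quot_bounded.
split=> [|TB U]; first exact: quot_totally_bounded_of_topology_eq.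
split; [exact: weakstar_open_of_rhoL_open | exact: rhoL_open_of_weakstar_open].
Qed.
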